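(* Let $q$ be a prime power, $v\ge2$, and let $u\in\mathbb{Z}$, $m\ge0$ and $\Delta\ge1$ be integers. Let $\mathcal{C}$ be a set of points of $\mathrm{PG}(v-1,q)$ with $|\mathcal{C}\cap H|\equiv u\pmod{\Delta}$ for every hyperplane $H$ and with cardinality $n=u+m\Delta\ge0$. Then $$(q-1)\cdot\sum_{h\in\mathbb{Z},\,h\le m}h(h-1)\,a_{u+h\Delta}=\tau_q(u,\Delta,m)\cdot\frac{q^{v-2}}{\Delta^2}-m(m-1),$$ where $$\tau_q(u,\Delta,m)=m(m-q)\Delta^2+\left(q^2u-2mqu+mq+2mu-qu-m\right)\Delta+(q-1)^2u^2+(q-1)u,$$ $a_i$ denotes the number of hyperplanes $H$ with $|\mathcal{C}\cap H|=i$, and $a_{u+h\Delta}:=0$ whenever $u+h\Delta<0$.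
   Context: $\mathrm{PG}(v-1,q)$ is the set of $1$-dimensional subspaces (points) of $\mathbb{F}_q^v$; hyperplanes are the $(v-1)$-dimensional subspaces of $\mathbb{F}_q^v$, and $\mathcal{C}\cap H$ is the set of points of $\mathcal{C}$ contained in $H$. *)

From HB Require Import structures.
From mathcomp Require Import all_boot all_order all_algebra all_field.
Set Implicit Arguments. Unset Strict Implicit. Unset Printing Implicit Defensive.
Import GRing.Theory Num.Theory.
Import VectorInternalTheory.
Local Open Scope ring_scope.

HB.instance Definition _ (F : finFieldType) (n : nat) :=
  [Countable of {vspace 'rV[F]_n} by <:].
HB.instance Definition _ (F : finFieldType) (n : nat) :=
  [Finite of {vspace 'rV[F]_n} by <:].

(* PG(v-1,q) over F with #|F| = q : points are the 1-dimensional subspaces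
   of F^v, hyperplanes the (v-1)-dimensional subspaces. *)
Definition PG_point (F : finFieldType) (v : nat) (P : {vspace 'rV[F]_v}) : bool :=
  \dim P == 1%N.
Definition PG_hyperplane (F : finFieldType) (v : nat) (H : {vspace 'rV[F]_v}) : bool :=
  \dim H == v.-1.

Definition meet_hyp (F : finFieldType) (v : nat)
  (C : {set {vspace 'rV[F]_v}}) (H : {vspace 'rV[F]_v}) : {set {vspace 'rV[F]_v}} :=
  [set P in C | (P <= H)%VS].

Definition spectrum (F : finFieldType) (v : nat)
  (C : {set {vspace 'rV[F]_v}}) (i : int) : nat :=
  #|[set H : {vspace 'rV[F]_v} | PG_hyperplane H & (#|meet_hyp C H|%:Z == i)]|.

Definition tau_q (q : nat) (u Delta m : int) : int :=
  m * (m - q%:Z) * Delta ^+ 2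
  + ((q%:Z) ^+ 2 * u - 2 * m * q%:Z * u + m * q%:Z + 2 * m * u - q%:Z * u - m) * Delta
  + (q%:Z - 1) ^+ 2 * u ^+ 2 + (q%:Z - 1) * u.

From HB Require Import structures.
From mathcomp Require Import all_boot all_order all_algebra all_field.
From mathcomp Require Import ring zify.
Set Implicit Arguments. Unset Strict Implicit. Unset Printing Implicit Defensive.
Import Order.TTheory GRing.Theory Num.Theory.
Local Open Scope ring_scope.

(* Every hyperplane is the kernel y^⊥ = {x | x y^T = 0} of exactly q - 1 nonzero
   vectors y, so (q - 1) Σ_H f(H) = Σ_{y ≠ 0} f(y^⊥).  A subspace U lies in y^⊥ for
   q^(v - dim U) vectors y; since two distinct points span a plane this gives
     Σ_{y ≠ 0} |C ∩ y^⊥|  = n (q^(v-1) - 1),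
     Σ_{y ≠ 0} |C ∩ y^⊥|² = n (q^(v-1) - 1) + n (n - 1) (q^(v-2) - 1).
   Writing |C ∩ H| = u + h_H Δ, the left-hand side is (q - 1) Σ_H h_H (h_H - 1), a
   quadratic expression in the |C ∩ H|, hence determined by these two moments. *)

Lemma card_row_space (F : finFieldType) m n (K : 'M[F]_(m, n)) :
  #|[set y : 'rV_n | (y <= K)%MS]| = (#|F| ^ \rank K)%N.
Proof.
have -> : [set y : 'rV_n | (y <= K)%MS] = [set w *m row_base K | w : 'rV_(\rank K)].
  apply/setP => y; rewrite inE -(eq_row_base K); apply/idP/imsetP.
    by case/submxP=> w ->; exists w.
  by case=> w _ ->; rewrite submxMl.
by rewrite card_imset ?card_mx ?mul1n //; apply/row_free_inj/row_base_free.
Qed.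

Lemma sum_nat_of_bool (T : finType) (p b : pred T) :
  (\sum_(x | p x) (b x : nat))%N = #|[set x | p x & b x]|.
Proof. by rewrite -sum1dep_card big_mkcondr; apply: eq_bigr => x _; case: (b x). Qed.

Lemma sum_by_level (R : nmodType) (T : finType) (P : pred T) (lvl : T -> int)
    (w : int -> R) (m : int) (N : nat) :
    (forall x, P x -> 0 <= m - lvl x < N%:Z) ->
  \sum_(k < N) w (m - k%:Z) *+ #|[set x | P x & lvl x == m - k%:Z]|
  = \sum_(x | P x) w (lvl x).
Proof.
move=> lvl_window; symmetry.
transitivity (\sum_(x | P x) \sum_(k < N | lvl x == m - k%:Z) w (m - k%:Z)).
  apply: eq_bigr => x Px; have := lvl_window x Px => /andP[ge0_k lt_kN].
  have lt_kN' : (absz (m - lvl x) < N)%N by lia.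
  rewrite (big_pred1 (Ordinal lt_kN')) => [|k] /=; first by congr w; lia.
  by rewrite -val_eqE /=; apply/eqP/eqP; lia.
rewrite (exchange_big_dep xpredT) //=; apply: eq_bigr => k _.
by rewrite -sumr_const; apply: eq_bigl => x; rewrite inE.
Qed.

Lemma level_window (u m Delta h : int) :
  1 <= Delta -> 0 <= u + h * Delta <= u + m * Delta ->
  0 <= m - h < (absz m + absz u).+1%:Z.
Proof. by move=> Delta_ge1 /andP[]; nia. Qed.

Section Orthogonality.
Variables (F : finFieldType) (v : nat).
Local Notation V := 'rV[F]_v.

Definition orthv (y : V) : {vspace V} := lker (linfun (mulmxr y^T : V -> 'M[F]_1)).

Lemma mem_orthv x y : (x \in orthv y) = (x *m y^T == 0).
Proof. by rewrite memv_ker lfunE. Qed.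

Lemma orthv_sym x y : (x \in orthv y) = (y \in orthv x).
Proof. by rewrite !mem_orthv -[y *m _]trmxK trmx_mul trmxK trmx_eq0. Qed.

Lemma orthv0 : orthv 0 = fullv.
Proof. by apply/vspaceP => x; rewrite mem_orthv trmx0 mulmx0 eqxx memvf. Qed.

Definition basis_mx (U : {vspace V}) : 'M[F]_(\dim U, v) :=
  \matrix_(i < \dim U) (vbasis U)`_i.

Lemma row_free_basis_mx U : row_free (basis_mx U).
Proof.
rewrite -kermx_eq0; apply/rowV0P => w /sub_kermxP wX0.
move/freeP: (basis_free (vbasisP U)) => /(_ (w 0)) free_U.
apply/rowP => i; rewrite mxE; apply: free_U; rewrite -[RHS]wX0 mulmx_sum_row.
by apply: eq_bigr => j _; rewrite rowK.
Qed.

Lemma subv_orthvE U y : (U <= orthv y)%VS = (y <= kermx (basis_mx U)^T)%MS.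
Proof.
rewrite -{1}(span_basis (vbasisP U)); apply/span_subvP/sub_kermxP => [Uy | yX].
  apply: trmx_inj; rewrite trmx_mul trmxK trmx0; apply/row_matrixP => i.
  by rewrite row_mul rowK row0; apply/eqP; rewrite -mem_orthv Uy ?mem_nth ?size_tuple.
move=> x /(nthP 0)[i]; rewrite size_tuple => ltiU <-; rewrite mem_orthv.
have := congr1 (row (Ordinal ltiU)) (congr1 trmx yX).
by rewrite trmx_mul trmxK trmx0 row_mul rowK row0 => ->.
Qed.

Lemma card_subv_orthv U : #|[set y : V | (U <= orthv y)%VS]| = (#|F| ^ (v - \dim U))%N.
Proof.
under eq_finset => y do rewrite subv_orthvE.
by rewrite card_row_space mxrank_ker mxrank_tr (eqP (row_free_basis_mx U)).
Qed.

Lemma sum_subv_orthv U :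
  (\sum_(y : V | y != 0%R) ((U <= orthv y)%VS : nat))%N = (#|F| ^ (v - \dim U)).-1.
Proof.
rewrite sum_nat_of_bool -card_subv_orthv (cardsD1 0 [set y : V | (U <= orthv y)%VS]).
by rewrite inE orthv0 subvf; apply: eq_card => y; rewrite !inE.
Qed.

Lemma dim_orthv y : y != 0 -> \dim (orthv y) = v.-1.
Proof.
move=> nz_y; have := card_subv_orthv <[y]>; rewrite dim_vline nz_y subn1.
have -> : [set x : V | (<[y]> <= orthv x)%VS] = [set x in orthv y].
  by apply/setP => x; rewrite !inE -memvE orthv_sym.
by rewrite cardsE card_vspace; apply: (expnI (finNzRing_gt1 F)).
Qed.

Lemma sum_orthv (R : nmodType) (g : {vspace V} -> R) : (0 < v)%N ->
  \sum_(y | y != 0) g (orthv y) = (\sum_(H | PG_hyperplane H) g H) *+ (#|F|.-1).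
Proof.
move=> v_gt0; rewrite (partition_big orthv (@PG_hyperplane F v)) => [|y nz_y]; last first.
  by rewrite /PG_hyperplane dim_orthv.
rewrite -sumrMnl; apply: eq_bigr => H hypH.
rewrite (eq_bigr (fun=> g H)) => [|y /andP[_ /eqP ->] //].
rewrite sumr_const; congr (_ *+ _).
have v_pred : (v - v.-1 = 1)%N by lia.
have := sum_subv_orthv H; rewrite sum_nat_of_bool (eqP hypH) v_pred expn1 => <-.
apply: eq_card => y; rewrite !inE unfold_in /= (eq_sym (orthv y)) eqEdim.
by have [nz_y|] //= := boolP (y != 0); rewrite dim_orthv // (eqP hypH) leqnn andbT.
Qed.

Lemma dimv_add_points (P Q : {vspace V}) :
  PG_point P -> PG_point Q -> P != Q -> \dim (P + Q) = 2%N.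
Proof.
move=> /eqP dimP /eqP dimQ neqPQ; rewrite dimv_disjoint_sum ?dimP ?dimQ //.
apply/eqP; rewrite -dimv_eq0; apply: contraR neqPQ => nz_PQ.
rewrite eqEdim dimP dimQ leqnn andbT; apply/capv_idPl/eqP.
rewrite -(dimv_leqif_eq (capvSl P Q)).2 dimP.
by have := dimvS (capvSl P Q); rewrite dimP; lia.
Qed.

Lemma card_meet_hypE (C : {set {vspace V}}) H :
  #|meet_hyp C H| = (\sum_(P in C) ((P <= H)%VS : nat))%N.
Proof. by rewrite sum_nat_of_bool. Qed.

Section Moments.
Variable C : {set {vspace V}}.
Hypothesis C_points : forall P, P \in C -> PG_point P.

Lemma sum_card_meet_orthv :
  (\sum_(y : V | y != 0%R) #|meet_hyp C (orthv y)|)%N = (#|C| * (#|F| ^ v.-1).-1)%N.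
Proof.
under eq_bigr do rewrite card_meet_hypE.
rewrite exchange_big /= -sum_nat_const; apply: eq_bigr => P C_P.
by rewrite sum_subv_orthv (eqP (C_points C_P)) subn1.
Qed.

Lemma sum_card_meet_orthv_sq :
  (\sum_(y : V | y != 0%R) #|meet_hyp C (orthv y)| ^ 2)%N
  = (#|C| * (#|F| ^ v.-1).-1 + #|C| * #|C|.-1 * (#|F| ^ v.-2).-1)%N.
Proof.
under eq_bigr do rewrite card_meet_hypE -mulnn big_distrl /=.
under eq_bigr do under eq_bigr do rewrite big_distrr /=.
rewrite exchange_big /= -mulnA -mulnDr -sum_nat_const; apply: eq_bigr => P C_P.
rewrite exchange_big (bigD1 P) //=; congr (_ + _).
  under eq_bigr do rewrite mulnb andbb.
  by rewrite sum_subv_orthv (eqP (C_points C_P)) subn1.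
rewrite (eq_bigr (fun=> (#|F| ^ v.-2).-1)) => [|Q /andP[C_Q neqQP]]; last first.
  under eq_bigr do rewrite mulnb -subv_add.
  by rewrite sum_subv_orthv dimv_add_points ?C_points // 1?eq_sym // subn2.
rewrite sum_nat_const (cardD1 P C) C_P; congr (_ * _).
by apply: eq_card => Q; rewrite !inE andbC.
Qed.

End Moments.

End Orthogonality.

Section Spectrum.
Variables (F : finFieldType) (v : nat) (C : {set {vspace 'rV[F]_v}}) (u m Delta : int).
Hypothesis Delta_ge1 : 1 <= Delta.
Hypothesis C_points : forall P, P \in C -> PG_point P.
Hypothesis C_mod : forall H : {vspace 'rV[F]_v}, PG_hyperplane H ->
  (#|meet_hyp C H|%:Z == u %[mod Delta])%Z.
Hypothesis card_C : #|C|%:Z = u + m * Delta.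

Let Delta_neq0 : Delta != 0.
Proof. by rewrite gt_eqF // (lt_le_trans ltr01 Delta_ge1). Qed.

Definition level (H : {vspace 'rV[F]_v}) : int := ((#|meet_hyp C H|%:Z - u) %/ Delta)%Z.

Lemma card_meet_level H : PG_hyperplane H -> #|meet_hyp C H|%:Z = u + level H * Delta.
Proof. by move/C_mod; rewrite eqz_mod_dvd => /divzK ->; rewrite addrC subrK. Qed.

Lemma spectrum_level h :
  spectrum C (u + h * Delta) = #|[set H | PG_hyperplane H & level H == h]|.
Proof.
apply: eq_card => H; rewrite !inE; have [/card_meet_level ->|] //= := boolP (PG_hyperplane H).
by apply/eqP/eqP => [/addrI /(mulIf Delta_neq0)|->].
Qed.

Lemma sum_spectrum (R : pzSemiRingType) (w : int -> R) :
  \sum_(k < (absz m + absz u).+1) w (m - k%:Z) * (spectrum C (u + (m - k%:Z) * Delta))%:R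
  = \sum_(H | PG_hyperplane H) w (level H).
Proof.
under eq_bigr do rewrite spectrum_level mulr_natr.
apply: sum_by_level => H hypH; apply: (@level_window u m Delta _ Delta_ge1).
rewrite -card_meet_level // -card_C lez_nat /=.
by apply/subset_leq_card/subsetP => P; rewrite inE => /andP[].
Qed.

Local Notation q := (#|F|%:R : rat).
Local Notation n := (#|C|%:R : rat).

Lemma sum_orthv_level_binomial :
  \sum_(y : 'rV[F]_v | y != 0) ((level (orthv y) * (level (orthv y) - 1))%:~R : rat)
  = (n * (q ^+ v.-1 - 1) + n * (n - 1) * (q ^+ v.-2 - 1)
     - (2 * u%:~R + Delta%:~R) * n * (q ^+ v.-1 - 1)
     + u%:~R * (u%:~R + Delta%:~R) * (q ^+ v - 1)) / Delta%:~R ^+ 2.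
Proof.
pose c y := #|meet_hyp C (orthv y)|.
under eq_bigr => y nz_y.
  have -> : ((level (orthv y) * (level (orthv y) - 1))%:~R : rat) =
      ((c y ^ 2)%:R - (2 * u%:~R + Delta%:~R) * (c y)%:R + u%:~R * (u%:~R + Delta%:~R))
      / Delta%:~R ^+ 2.
    have hyp_y : PG_hyperplane (orthv y) by apply/eqP/dim_orthv.
    rewrite natrX; have -> : (c y)%:R = u%:~R + (level (orthv y))%:~R * Delta%:~R :> rat.
      by rewrite -[LHS]/((c y)%:Z%:~R) card_meet_level // intrD intrM.
    by rewrite intrM intrB; field; rewrite intr_eq0.
  over.
rewrite -mulr_suml big_split sumrB /= -!mulr_sumr sumr_const -!natr_sum.
rewrite sum_card_meet_orthv_sq // sum_card_meet_orthv // cardC1 card_mx mul1n.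
have natr_predX k : ((#|F| ^ k).-1%:R : rat) = q ^+ k - 1.
  by rewrite -subn1 natrB ?expn_gt0 ?natrX // ltnW // finNzRing_gt1.
have natr_card_pred : n * #|C|.-1%:R = n * (n - 1).
  by case: #|C| => [|k]; rewrite ?mul0r // -natr1 addrK.
by rewrite -[_ *+ (#|F| ^ v).-1]mulr_natr !natrD !natrM natr_card_pred !natr_predX !mulrA.
Qed.

End Spectrum.

Theorem lemma5p6 (F : finFieldType) (v : nat) (u m Delta : int)
  (C : {set {vspace 'rV[F]_v}}) :
  (2 <= v)%N -> 0 <= m -> 1 <= Delta ->
  (forall P, P \in C -> PG_point P) ->
  (forall H : {vspace 'rV[F]_v}, PG_hyperplane H ->
      (#|meet_hyp C H|%:Z == u %[mod Delta])%Z) ->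
  #|C|%:Z = u + m * Delta ->
  ((#|F|%:R - 1) *
     \sum_(k < (absz m + absz u).+1)
        (let h : int := m - k%:Z in
         (h * (h - 1))%:~R * (spectrum C (u + h * Delta))%:R)
   : rat)
  = (tau_q #|F| u Delta m)%:~R * (#|F|%:R ^+ (v - 2)%N) / (Delta%:~R ^+ 2)
    - (m * (m - 1))%:~R.
Proof.
move=> v_ge2 m_ge0 Delta_ge1 C_points C_mod card_C.
rewrite (sum_spectrum Delta_ge1 C_mod card_C (fun h => (h * (h - 1))%:~R)).
rewrite -[_ - 1](natrB _ (ltnW (finNzRing_gt1 F))) subn1 mulr_natl -sum_orthv; last by lia.
rewrite sum_orthv_level_binomial //.
have -> : (#|C|%:R : rat) = u%:~R + m%:~R * Delta%:~R.
  by rewrite -[LHS]/(#|C|%:Z%:~R) card_C intrD intrM.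
have -> : (#|F|%:R : rat) ^+ v = #|F|%:R ^+ 2 * #|F|%:R ^+ (v - 2).
  by rewrite -exprD; congr (_ ^+ _); lia.
have -> : (#|F|%:R : rat) ^+ v.-1 = #|F|%:R * #|F|%:R ^+ (v - 2).
  by rewrite -exprS; congr (_ ^+ _); lia.
rewrite -subn2 /tau_q !(rmorphD, rmorphM, rmorphN, rmorphXn, rmorph1) /=.
by field; rewrite intr_eq0; lia.
Qed.
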